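(* Let $P$ be a correct net. The linear skeleton of the correction net $P_0$ of $P$, given by the multiplicative nodes (${\mathtt m}$-nodes) and the multiplicative (linear) paths between them (i.e. the paths made of ⅋-links (par-links) and $\otimes$-links connecting ${\mathtt m}$-nodes), is a linear order.
   Context: Nets are directed labelled hyper-graphs: nodes are typed ${\mathtt e}$ (exponential) or ${\mathtt m}$ (multiplicative); links (hyper-edges, with any number of source and target nodes) are labelled by $!$ (promotion), ${\mathsf d}$ (dereliction), ${\mathsf w}$ (weakening), ⅋ (par), $\otimes$ (tensor), $[\cdot]$ (context hole) or ${\tt genax}$ (generalised axiom); contraction is represented by an ${\mathtt e}$-node having several incoming ${\mathsf d}$-links. A pre-net has a root, a terminal ${\mathtt m}$-node (terminal = not the source of any link); every node has at least one incoming link and at most one outgoing link, and every ${\mathtt m}$-node has exactly one incoming link. A net is a pre-net with, for each $!$-link $l$, a box (a sub-pre-net not containing $l$, whose root is the ${\mathtt m}$-source of $l$), subject to nesting and closure conditions. The level of a link is the number of boxes it is nested in. The correction net $P_0$ of $P$ is obtained by collapsing every $!$-box at level 0 (the $!$-link together with its box) into a single ${\tt genax}$-link with the same interface (free variables). $P$ is correct if: the root of $P$ is the only terminal ${\mathtt m}$-node of $P_0$; $P_0$ is acyclic (no directed path of positive length from a node to itself); and the box of every $!$-link at level 0 is (recursively) correct. The only links connecting ${\mathtt m}$-nodes to ${\mathtt m}$-nodes are ⅋-links and $\otimes$-links. *)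

From HB Require Import structures.
From mathcomp Require Import all_boot.
Set Implicit Arguments. Unset Strict Implicit. Unset Printing Implicit Defensive.

(* Node types: e (exponential) and m (multiplicative). *)
Inductive kind := KE | KM.
Definition kind_eqb (a b : kind) : bool :=
  match a, b with KE, KE | KM, KM => true | _, _ => false end.
Lemma kind_eqP : Equality.axiom kind_eqb.
Proof. by case; case; constructor. Qed.
HB.instance Definition _ := hasDecEq.Build kind kind_eqP.

(* Link labels: !, d, w, par, tensor, context hole, generalised axiom. *)
Inductive label := LBang | LDer | LWeak | LPar | LTens | LHole | LGenax.
Definition label_eqb (a b : label) : bool :=
  match a, b with
  | LBang, LBang | LDer, LDer | LWeak, LWeak | LPar, LPar | LTens, LTens
  | LHole, LHole | LGenax, LGenax => true
  | _, _ => false end.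
Lemma label_eqP : Equality.axiom label_eqb.
Proof. by case; case; constructor. Qed.
HB.instance Definition _ := hasDecEq.Build label label_eqP.

(* A net: a finite directed labelled hypergraph, a root, and a box for every
   !-link (given by its set of links; the nodes of the box are the nodes
   incident to these links). *)
Record net := Net {
  node : finType;
  link : finType;
  kindof : node -> kind;
  labof : link -> label;
  src : link -> seq node;
  tgt : link -> seq node;
  root : node;
  box : link -> {set link}
}.

Section Nets.
Variable P : net.
Local Notation node := (node P).
Local Notation link := (link P).
Local Notation kindof := (@kindof P).
Local Notation labof := (@labof P).
Local Notation src := (@src P).
Local Notation tgt := (@tgt P).
Local Notation box := (@box P).

Definition wf_link (k : link) : Prop :=
  match labof k with
  | LBang => exists x y, [/\ src k = [:: x], tgt k = [:: y],
                           kindof x = KM & kindof y = KE]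
  | LDer => exists x y, [/\ src k = [::], tgt k = [:: x; y],
                          kindof x = KM & kindof y = KE]
  | LWeak => exists y, src k = [::] /\ tgt k = [:: y] /\ kindof y = KE
  | LPar | LTens => exists x y z, [/\ src k = [:: x; y], tgt k = [:: z],
                          kindof x = KM, kindof y = KE & kindof z = KM]
  | LHole => exists z ys, [/\ src k = [::], tgt k = z :: ys,
                          kindof z = KM & all (fun y => kindof y == KE) ys]
  | LGenax => src k = [::] /\ all (fun y => kindof y == KE) (tgt k)
  end.

Definition outgoing (n : node) : {set link} := [set k | n \in src k].
Definition incoming (n : node) : {set link} := [set k | n \in tgt k].

Definition prenet : Prop :=
  [/\ kindof (root P) = KM /\ outgoing (root P) = set0,
      (forall n, incoming n != set0),
      (forall n, #|outgoing n| <= 1),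
      (forall n, kindof n = KM -> #|incoming n| = 1)
    & (forall k, wf_link k)].

Definition isbang (k : link) : bool := labof k == LBang.

Definition incident (S : {set link}) (n : node) : bool :=
  [exists k in S, (n \in src k) || (n \in tgt k)].

Definition subprenet (S : {set link}) (x : node) : Prop :=
  [/\ incident S x,
      (forall k, k \in S -> x \notin src k)
    & (forall n, incident S n -> exists2 k, k \in S & n \in tgt k)].

Definition boxes_ok : Prop :=
  [/\ (forall l, isbang l ->
         l \notin box l /\ exists x, src l = [:: x] /\ subprenet (box l) x),
      (forall l l', isbang l -> isbang l' -> l' \in box l -> box l' \subset box l)
    & (forall l l', isbang l -> isbang l' -> l != l' ->
         [|| [disjoint box l & box l'], l \in box l' | l' \in box l])].

Definition is_net : Prop := prenet /\ boxes_ok.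

(* Correction net of the region S (a set of links: the whole net or a box). *)
Definition top0 (S : {set link}) (k : link) : bool :=
  (k \in S) && [forall l in S, isbang l ==> (k \notin box l)].

Definition fv_box (l : link) (n : node) : bool :=
  [&& kindof n == KE, incident (box l) n,
      [forall k in box l, n \notin src k]
    & [forall k in box l, isbang k ==> (n \notin tgt k)]].

(* links of P_0: inl k for a level-0 non-! link k,
   inr l for the genax-link replacing the level-0 !-link l and its box *)
Definition valid0 (S : {set link}) (e : link + link) : bool :=
  match e with
  | inl k => top0 S k && ~~ isbang k
  | inr l => top0 S l && isbang l
  end.
Definition src0 (e : link + link) : seq node :=
  match e with inl k => src k | inr _ => [::] end.
Definition tgt0 (e : link + link) : seq node :=
  match e with
  | inl k => tgt k
  | inr l => tgt l ++ [seq n <- enum node | fv_box l n]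
  end.
Definition lab0 (e : link + link) : label :=
  match e with inl k => labof k | inr _ => LGenax end.

Definition alive0 (S : {set link}) (n : node) : bool :=
  [exists e, valid0 S e && ((n \in src0 e) || (n \in tgt0 e))].
Definition step0 (S : {set link}) : rel node :=
  fun n n' => [exists e, [&& valid0 S e, n \in src0 e & n' \in tgt0 e]].
Definition terminal0 (S : {set link}) (n : node) : bool :=
  [forall e, valid0 S e ==> (n \notin src0 e)].
Definition acyclic0 (S : {set link}) : Prop :=
  forall n n', step0 S n n' -> ~~ connect (step0 S) n' n.

Definition cond0 (S : {set link}) (r : node) : Prop :=
  [/\ alive0 S r, kindof r = KM, terminal0 S r,
      (forall n, alive0 S n -> kindof n = KM -> terminal0 S n -> n = r)
    & acyclic0 S].

(* Correctness, recursively on the boxes at level 0 (fuel = size bound). *)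
Fixpoint corr (fuel : nat) (S : {set link}) (r : node) : Prop :=
  match fuel with
  | 0 => False
  | f.+1 => cond0 S r /\
      (forall l, valid0 S (inr l) -> forall x, src l = [:: x] -> corr f (box l) x)
  end.

Definition correct : Prop := corr #|link|.+1 [set: link] (root P).

Definition mstep0 : rel node :=
  fun u v => [&& kindof u == KM, kindof v == KM &
     [exists e, [&& valid0 [set: link] e, lab0 e \in [:: LPar; LTens],
                    u \in src0 e & v \in tgt0 e]]].
Definition skel_le : rel node := connect mstep0.
Definition skel_nodes : pred node :=
  fun n => alive0 [set: link] n && (kindof n == KM).

End Nets.
Arguments skel_le : clear implicits.
Arguments skel_nodes : clear implicits.
Arguments is_net : clear implicits.
Arguments correct : clear implicits.

Definition linear_order (T : Type) (A : pred T) (R : rel T) : Prop :=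
  [/\ {in A, reflexive R}, {in A &, antisymmetric R},
      {in A & &, transitive R} & {in A &, total R}].

From Pilot Require Import Defs.
From mathcomp Require Import all_boot.
Set Implicit Arguments. Unset Strict Implicit. Unset Printing Implicit Defensive.

(* Every m-node of P_0 other than the root is not terminal, and the only
   links of P_0 leaving an m-node are par/tensor links, whose m-source is
   their first source and whose target is an m-node; so every m-node has a
   multiplicative successor, and by acyclicity of P_0 multiplicative paths
   from every m-node reach the root.  Each m-node has exactly one incoming
   link, so multiplicative predecessors are unique: two paths ending at the
   root are nested, which makes any two m-nodes comparable.  Antisymmetry is
   again acyclicity. *)

Lemma connect_total_from (T : finType) (e : rel T) :
    (forall a b b', e a b -> e a b' -> b = b') ->
  forall w u v, connect e w u -> connect e w v -> connect e u v || connect e v u.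
Proof.
move=> e_fun w u v /connectP [p e_p ->]; elim: p w e_p => [|a p IHp] w /=.
  by move=> _ ->.
case/andP=> e_wa e_p /connectP [[|b q]] /=.
  by move=> _ ->; apply/orP; right; apply/connectP; exists (a :: p); rewrite //= e_wa.
case/andP=> e_wb e_q v_q; rewrite -(e_fun _ _ _ e_wa e_wb) in e_q v_q.
by apply: IHp => //; apply/connectP; exists q.
Qed.

Lemma connect_total_to (T : finType) (e : rel T) :
    (forall a a' b, e a b -> e a' b -> a = a') ->
  forall w u v, connect e u w -> connect e v w -> connect e u v || connect e v u.
Proof.
move=> e_inj w u v.
have rev x y : connect e x y = connect [rel a b | e b a] y x by rewrite connect_rev.
rewrite !rev orbC => w_u w_v.
apply: (connect_total_from _ w_u w_v) => a b b' /= ? ?.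
exact: (e_inj _ _ a).
Qed.

Section AcyclicRelations.
Variables (T : finType) (e : rel T).
Hypothesis e_acyclic : forall x y, e x y -> ~~ connect e y x.

Lemma acyclic_connect_antisym : antisymmetric (connect e).
Proof.
move=> x y /andP [/connectP [[|a p] /= e_p ->] // y_x].
case/andP: e_p => e_xa a_y; case/negP: (e_acyclic e_xa).
by apply: connect_trans y_x; apply/connectP; exists p.
Qed.

Lemma acyclic_connect_sink (A : pred T) (r : T) :
    {in A, forall a, a != r -> exists2 b, b \in A & e a b} ->
  {in A, forall a, connect e a r}.
Proof.
move=> e_succ a; have [n] := ubnP #|[set x | connect e a x]|.
elim: n a => // n IHn a lt_reach_n Aa.
have [-> | a_neq_r] := eqVneq a r; first exact: connect0.
have [b Ab e_ab] := e_succ a Aa a_neq_r.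
apply: connect_trans (connect1 e_ab) (IHn b _ Ab).
rewrite ltnS in lt_reach_n; apply: leq_trans lt_reach_n.
apply: proper_card; apply/properP; split.
  by apply/subsetP => x; rewrite !inE; apply: connect_trans (connect1 e_ab).
by exists a; rewrite !inE ?connect0 ?(negbTE (e_acyclic e_ab)).
Qed.

End AcyclicRelations.

Lemma wf_link_msrc (P : net) (k : link P) (u : node P) :
    wf_link k -> ~~ isbang k -> u \in src k -> kindof u = KM ->
  labof k \in [:: LPar; LTens] /\
  exists y z, [/\ src k = [:: u; y], tgt k = [:: z] & kindof z = KM].
Proof.
rewrite /wf_link /isbang; case: (labof k) => //=
  [[? [? [->]]] | [? [->]] | [x [y [z [-> -> _ y_e z_m]]]]
  | [x [y [z [-> -> _ y_e z_m]]]] | [? [? [->]]] | [->]] //= _.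
all: rewrite !inE => /orP [/eqP-> | /eqP->]; by [split=> //; exists y, z | rewrite y_e].
Qed.

Section Skeleton.
Variable P : net.
Local Notation mstep := (@mstep0 P).
Local Notation P0 := [set: link P].

Lemma mstep_step0 (u v : node P) : mstep u v -> step0 P0 u v.
Proof.
case/and3P=> _ _ /existsP [e /and4P [e_valid _ u_src v_tgt]].
by apply/existsP; exists e; rewrite e_valid u_src v_tgt.
Qed.

Lemma mstep_skel_nodes (u v : node P) : mstep u v -> v \in skel_nodes P.
Proof.
case/and3P=> _ v_m /existsP [e /and4P [e_valid _ _ v_tgt]].
rewrite unfold_in /skel_nodes v_m andbT.
by apply/existsP; exists e; rewrite e_valid v_tgt orbT.
Qed.

Hypothesis P_net : is_net P.

Lemma net_wf_link (k : link P) : wf_link k.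
Proof. by case: P_net => -[_ _ _ _ wfP] _; apply: wfP. Qed.

Lemma mstep_pred_unique (u u' v : node P) : mstep u v -> mstep u' v -> u = u'.
Proof.
have mstep_link w : mstep w v ->
    exists2 k : link P, v \in tgt k & exists y, src k = [:: w; y].
  case/and3P=> /eqP w_m _ /existsP [[k | l] /and4P [/andP [_ k_nb] _ w_src v_tgt]] //.
  have [_ [y [z [k_src _ _]]]] := wf_link_msrc (net_wf_link k) k_nb w_src w_m.
  by exists k => //; exists y.
move=> uv u'v; have /eqP v_m : kindof v == KM by case/and3P: uv.
have [k v_k [y k_src]] := mstep_link u uv.
have [k' v_k' [y' k'_src]] := mstep_link u' u'v.
have /cards1P [l inc_v] : #|incoming v| == 1.
  by case: P_net => -[_ _ _ inc1 _] _; rewrite (inc1 _ v_m).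
have : k \in incoming v by rewrite inE.
have : k' \in incoming v by rewrite inE.
rewrite inc_v !inE => /eqP k'l /eqP kl; subst k k'.
by move: k'_src; rewrite k_src => -[].
Qed.

Hypothesis P_cond0 : cond0 P0 (Defs.root P).

Lemma mstep_acyclic (u v : node P) : mstep u v -> ~~ connect mstep v u.
Proof.
move=> /mstep_step0 uv; case: P_cond0 => _ _ _ _ /(_ _ _ uv); apply: contra.
by apply: connect_sub => x y /mstep_step0 /connect1.
Qed.

Lemma mstep_succ :
  {in skel_nodes P, forall u, u != Defs.root P ->
    exists2 v, v \in skel_nodes P & mstep u v}.
Proof.
move=> u; rewrite unfold_in => /andP [u_alive /eqP u_m] u_nroot.
have : ~~ terminal0 P0 u.
  by case: P_cond0 => _ _ _ root_uniq _; apply: contra u_nroot => /root_uniq ->.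
case/forallPn => -[k | l]; rewrite negb_imply negbK => /andP [k_valid u_src] //.
have /andP [_ k_nb] := k_valid.
have [k_mult [y [z [_ k_tgt z_m]]]] := wf_link_msrc (net_wf_link k) k_nb u_src u_m.
suff uz : mstep u z by exists z; first exact: mstep_skel_nodes uz.
apply/and3P; split; rewrite ?u_m ?z_m //; apply/existsP; exists (inl k).
by rewrite k_valid k_mult u_src /= k_tgt inE.
Qed.

End Skeleton.

Theorem lemma1 (P : net) :
  is_net P -> correct P -> linear_order (skel_nodes P) (skel_le P).
Proof.
move=> P_net [P_cond0 _].
have mstep_acyc := mstep_acyclic P_cond0.
have to_root := acyclic_connect_sink mstep_acyc (mstep_succ P_net P_cond0).
split.
- by move=> u _; apply: connect0.
- by move=> u v _ _; apply: (acyclic_connect_antisym mstep_acyc).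
- by move=> v u w _ _ _; apply: connect_trans.
- move=> u v u_skel v_skel.
  apply: (connect_total_to (mstep_pred_unique P_net)).
  - exact: to_root u u_skel.
  - exact: to_root v v_skel.
Qed.
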